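(* Let $(\vdash,\overline{\cdot},\widehat{\cdot})$ be a setting satisfying Pre-Relevance and let $\mathcal{S},\mathcal{S}'\subseteq\mathcal{L}$ with $\mathcal{S}\mid\mathcal{S}'$. If $a\in\mathit{Arg}_{\vdash}(\mathcal{S}\cup\mathcal{S}')$ attacks $b\in\mathit{Arg}_{\vdash}(\mathcal{S})$, then there is an $a'\in\mathit{Arg}_{\vdash}(\mathcal{S}\cap\mathsf{Supp}(a))$ that attacks $b$.
   Context: $\mathcal{L}$ is the set of formulas of a language built from propositional atoms; $\mathsf{Atoms}(\mathcal{S})$ is the set of atoms occurring in $\mathcal{S}$, and $\mathcal{S}_1\mid\mathcal{S}_2$ means $\mathsf{Atoms}(\mathcal{S}_1)\cap\mathsf{Atoms}(\mathcal{S}_2)=\emptyset$. A setting is $(\vdash,\overline{\cdot},\widehat{\cdot})$ with ${\vdash}\subseteq\wp_{\sf fin}(\mathcal{L})\times\mathcal{L}$ arbitrary, $\overline{\cdot}:\mathcal{L}\to\wp(\mathcal{L})$, $\widehat{\cdot}$ assigning to each nonempty finite set a finite set of formulas, with $\widehat{\emptyset}=\emptyset$. $\mathit{Arg}_{\vdash}(\mathcal{S})=\{(\Gamma,\gamma):\Gamma\subseteq\mathcal{S}\text{ finite},\Gamma\vdash\gamma\}$, $\mathsf{Supp}((\Gamma,\gamma))=\Gamma$. $(\Gamma,\gamma)$ attacks $(\Gamma',\gamma')$ iff $\gamma\in\overline{\phi}$ for some $\phi\in\widehat{\Gamma'}$. Pre-Relevance of the setting: (a) for all $\mathcal{S}_1,\mathcal{S}_2,\phi$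 with $\mathcal{S}_1\cup\{\phi\}\mid\mathcal{S}_2$, $\mathcal{S}_1\cup\mathcal{S}_2\vdash\phi$ implies $\mathcal{S}_1'\vdash\phi$ for some $\mathcal{S}_1'\subseteq\mathcal{S}_1$; (b) primeness: for all sets of atoms $\mathcal{A}_1\mid\mathcal{A}_2$, all finite $\mathcal{S}_1,\mathcal{T}_1,\mathcal{S}_2,\mathcal{T}_2$ with $\mathsf{Atoms}(\mathcal{S}_i),\mathsf{Atoms}(\mathcal{T}_i)\subseteq\mathcal{A}_i$, and all $\phi,\psi$ with $\psi\in\overline{\phi}$, $\phi\in\widehat{\mathcal{T}_1\cup\mathcal{T}_2}$: if $\mathcal{S}_1\cup\mathcal{S}_2\vdash\psi$ then there are $i\in\{1,2\}$, $\mathcal{S}_i'\subseteq\mathcal{S}_i$, $\phi_i\in\widehat{\mathcal{T}_i}$, $\psi_i\in\overline{\phi_i}$ with $\mathcal{S}_i'\vdash\psi_i$; (c) $\widehat{\Delta}\subseteq\widehat{\Delta\cup\Delta'}$ for all finite $\Delta,\Delta'$. *)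

From mathcomp Require Import all_boot.
From mathcomp Require Import boolp classical_sets cardinality.
Set Implicit Arguments. Unset Strict Implicit. Unset Printing Implicit Defensive.
Local Open Scope classical_set_scope.

Section Defs.
(* A : type of propositional atoms, F : type of formulas (the language L),
   atm phi : the set of atoms occurring in phi. *)
Variables (A F : Type) (atm : F -> set A).

Definition Atoms (S : set F) : set A := \bigcup_(x in S) atm x.

Definition indep (S1 S2 : set F) : Prop := Atoms S1 `&` Atoms S2 = set0.

Variables (vdash : set F -> F -> Prop) (bar : F -> set F) (hat : set F -> set F).

Definition is_setting : Prop :=
  [/\ (forall G g, vdash G g -> finite_set G),
      (forall D, finite_set D -> finite_set (hat D)) &
      hat set0 = set0].

Definition Arg (S : set F) : set (set F * F) :=
  [set a | [/\ a.1 `<=` S, finite_set a.1 & vdash a.1 a.2]].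

Definition Supp (a : set F * F) : set F := a.1.

Definition attacks (a b : set F * F) : Prop :=
  exists2 phi, hat b.1 phi & bar phi a.2.

Definition pre_relevance_a : Prop :=
  forall (S1 S2 : set F) (phi : F),
    indep (S1 `|` [set phi]) S2 -> vdash (S1 `|` S2) phi ->
    exists2 S1', S1' `<=` S1 & vdash S1' phi.

Definition pre_relevance_b : Prop :=
  forall (A1 A2 : set A), A1 `&` A2 = set0 ->
  forall (S1 T1 S2 T2 : set F),
    finite_set S1 -> finite_set T1 -> finite_set S2 -> finite_set T2 ->
    Atoms S1 `<=` A1 -> Atoms T1 `<=` A1 ->
    Atoms S2 `<=` A2 -> Atoms T2 `<=` A2 ->
  forall phi psi : F, bar phi psi -> hat (T1 `|` T2) phi ->
    vdash (S1 `|` S2) psi ->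
    (exists S1', exists phi1, exists psi1,
        [/\ S1' `<=` S1, hat T1 phi1, bar phi1 psi1 & vdash S1' psi1]) \/
    (exists S2', exists phi2, exists psi2,
        [/\ S2' `<=` S2, hat T2 phi2, bar phi2 psi2 & vdash S2' psi2]).

Definition pre_relevance_c : Prop :=
  forall D D' : set F, finite_set D -> finite_set D' ->
    hat D `<=` hat (D `|` D').

Definition pre_relevance : Prop :=
  [/\ pre_relevance_a, pre_relevance_b & pre_relevance_c].

End Defs.

(* Split the support of the attacker along the two independent languages: the
   part inside S and the part inside S'.  Primeness, applied with the attacked
   support on the S-side and the empty set on the S'-side, must yield the
   attack from the S-side, because hat(emptyset) is empty. *)
From mathcomp Require Import all_boot.
From mathcomp Require Import boolp classical_sets cardinality.
Set Implicit Arguments. Unset Strict Implicit.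
Local Open Scope classical_set_scope.

Section Primeness.
Variables (A F : Type) (atm : F -> set A).
Variables (vdash : set F -> F -> Prop) (bar : F -> set F) (hat : set F -> set F).

Lemma Atoms_subset (S1 S2 : set F) : S1 `<=` S2 -> Atoms atm S1 `<=` Atoms atm S2.
Proof. exact: bigcup_subset. Qed.

Lemma Atoms_set0 : Atoms atm set0 = set0.
Proof. exact: bigcup_set0. Qed.

Hypothesis hat_set0 : hat set0 = set0.
Hypothesis prime : pre_relevance_b atm vdash bar hat.

Lemma attacks_from_indep_part (A1 A2 : set A) (S1 S2 : set F) (psi : F)
    (b : set F * F) :
  A1 `&` A2 = set0 ->
  finite_set S1 -> finite_set S2 -> finite_set b.1 ->
  Atoms atm S1 `<=` A1 -> Atoms atm b.1 `<=` A1 -> Atoms atm S2 `<=` A2 ->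
  vdash (S1 `|` S2) psi -> attacks bar hat (S1 `|` S2, psi) b ->
  exists S1', exists psi1,
    [/\ S1' `<=` S1, vdash S1' psi1 & attacks bar hat (S1', psi1) b].
Proof.
move=> A12 S1f S2f Tf S1A1 TA1 S2A2 vpsi [phi hphi bpsi].
have empty_side : Atoms atm set0 `<=` A2 by rewrite Atoms_set0.
have := prime A12 S1f Tf S2f (finite_set0 F) S1A1 TA1 S2A2 empty_side bpsi.
rewrite setU0 => /(_ hphi vpsi) [[S1' [phi1 [psi1 [sub hphi1 bpsi1 vpsi1]]]]|].
- by exists S1', psi1; split=> //; exists phi1.
- by case=> ? [phi2 [? [_]]]; rewrite hat_set0.
Qed.

End Primeness.

Theorem lemma2 (A F : Type) (atm : F -> set A)
  (vdash : set F -> F -> Prop) (bar : F -> set F) (hat : set F -> set F) :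
  is_setting vdash hat ->
  pre_relevance atm vdash bar hat ->
  forall S S' : set F, indep atm S S' ->
  forall a b : set F * F,
    Arg vdash (S `|` S') a -> Arg vdash S b -> attacks bar hat a b ->
    exists2 a', Arg vdash (S `&` Supp a) a' & attacks bar hat a' b.
Proof.
move=> [vdash_fin _ hat0] [_ prime _] S S' indepSS' [G g] b.
move=> [/= GSS' Gf vg] [bS bf _] attack.
have splitG : (S `&` G) `|` (S' `&` G) = G by rewrite -setIUl; apply/setIidr.
rewrite -splitG in vg attack.
have [S1 [g1 [S1G vg1 attack1]]] :=
  attacks_from_indep_part hat0 prime indepSS' (finite_setIr _ Gf)
    (finite_setIr _ Gf) bf (Atoms_subset (@subIsetl _ _ _))
    (Atoms_subset bS) (Atoms_subset (@subIsetl _ _ _)) vg attack.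
by exists (S1, g1) => //; split=> //; exact: vdash_fin vg1.
Qed.
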